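(* Let $1<\alpha\leq 2$ and $c_\alpha=\frac{\alpha-1}{\alpha}\vee \sqrt{\frac{2-\alpha}{\alpha}}$. Then $1+y+c_\alpha|y|^\alpha>0$ for all $y\in\mathbb R$, and \[ -\log(1+y+c_\alpha |y|^\alpha)\leq \log(1-y +c_\alpha |y|^{\alpha}) \quad \text{for all } y\in \mathbb R. \]
   Context: $a\vee b=\max(a,b)$. *)

From Stdlib Require Import Reals.
Open Scope R_scope.

(* Real power x^a for x >= 0 and a > 0, with the convention 0^a = 0.
   (Rpower x a = exp (a * ln x) is only meaningful for x > 0.) *)
Definition rpow (x a : R) : R := if Req_EM_T x 0 then 0 else Rpower x a.

Definition c_alpha (alpha : R) : R :=
  Rmax ((alpha - 1) / alpha) (sqrt ((2 - alpha) / alpha)).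

(* Put [p = |y|^alpha].  Weighted AM-GM with weights [2(alpha-1)/alpha] and
   [(2-alpha)/alpha] gives [alpha y^2 <= 2(alpha-1) p + (2-alpha) p^2], and the
   choice of [c_alpha] turns this into [y^2 <= 2 c p + c^2 p^2].  Hence
   [(1+y+cp)(1-y+cp) = (1+cp)^2 - y^2 >= 1], which yields both claims. *)
From Stdlib Require Import Reals Lra Psatz.
Open Scope R_scope.

Lemma rpow_ge0 (t a : R) : 0 <= rpow t a.
Proof.
  unfold rpow; destruct (Req_EM_T t 0); [lra|].
  left; apply exp_pos.
Qed.

Lemma exp_tangent_le (x u : R) : exp x * (1 + (u - x)) <= exp u.
Proof.
  replace u with (x + (u - x)) at 2 by ring.
  rewrite exp_plus.
  apply Rmult_le_compat_l; [left; apply exp_pos | apply exp_ineq1_le].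
Qed.

Lemma exp_convex_comb (a b x u v : R) :
  0 <= a -> 0 <= b -> a * u + b * v = (a + b) * x ->
  (a + b) * exp x <= a * exp u + b * exp v.
Proof.
  intros ha hb hx.
  pose proof (Rmult_le_compat_l a _ _ ha (exp_tangent_le x u)).
  pose proof (Rmult_le_compat_l b _ _ hb (exp_tangent_le x v)).
  assert (expand : a * (exp x * (1 + (u - x))) + b * (exp x * (1 + (v - x)))
          = (a + b) * exp x + exp x * (a * u + b * v - (a + b) * x)) by ring.
  rewrite hx, Rminus_diag, Rmult_0_r, Rplus_0_r in expand; lra.
Qed.

Lemma rpow_weighted_am_gm (alpha t : R) :
  1 < alpha -> alpha <= 2 -> 0 <= t ->
  alpha * t ^ 2 <= 2 * (alpha - 1) * rpow t alpha + (2 - alpha) * rpow t alpha ^ 2.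
Proof.
  intros h1 h2 ht; unfold rpow.
  destruct (Req_EM_T t 0) as [->|t_neq0]; [simpl; lra|].
  unfold Rpower; set (L := ln t).
  assert (t_sq : t ^ 2 = exp (2 * L)).
  { unfold L; rewrite <- (exp_ln t) at 1 by lra.
    simpl; rewrite Rmult_1_r, <- exp_plus; f_equal; ring. }
  assert (pow_sq : exp (alpha * L) ^ 2 = exp (2 * alpha * L)).
  { simpl; rewrite Rmult_1_r, <- exp_plus; f_equal; ring. }
  rewrite t_sq, pow_sq.
  replace alpha with (2 * (alpha - 1) + (2 - alpha)) at 1 by ring.
  apply exp_convex_comb; [lra | lra | ring].
Qed.

Lemma c_alpha_bounds (alpha : R) : 1 < alpha -> alpha <= 2 ->
  2 * (alpha - 1) <= 2 * alpha * c_alpha alpha /\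
  2 - alpha <= alpha * c_alpha alpha ^ 2.
Proof.
  intros h1 h2.
  pose proof (Rmax_l ((alpha - 1) / alpha) (sqrt ((2 - alpha) / alpha))) as c_ge_l.
  pose proof (Rmax_r ((alpha - 1) / alpha) (sqrt ((2 - alpha) / alpha))) as c_ge_r.
  fold (c_alpha alpha) in c_ge_l, c_ge_r; set (c := c_alpha alpha) in *.
  assert (q_ge0 : 0 <= (2 - alpha) / alpha) 
    by (apply Rmult_le_pos; [lra | left; apply Rinv_0_lt_compat; lra]).
  pose proof (sqrt_pos ((2 - alpha) / alpha)).
  pose proof (sqrt_sqrt _ q_ge0) as sqrt_sq.
  assert (alpha * ((alpha - 1) / alpha) = alpha - 1) by (field; lra).
  assert (alpha * ((2 - alpha) / alpha) = 2 - alpha) by (field; lra).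
  split; nra.
Qed.

Lemma sqr_le_c_alpha_rpow (alpha y : R) : 1 < alpha -> alpha <= 2 ->
  y * y <= 2 * c_alpha alpha * rpow (Rabs y) alpha
           + (c_alpha alpha * rpow (Rabs y) alpha) ^ 2.
Proof.
  intros h1 h2.
  destruct (c_alpha_bounds alpha h1 h2) as [c1 c2].
  pose proof (rpow_weighted_am_gm alpha (Rabs y) h1 h2 (Rabs_pos y)) as am_gm.
  pose proof (rpow_ge0 (Rabs y) alpha).
  rewrite pow2_abs in am_gm.
  set (c := c_alpha alpha) in *; set (p := rpow (Rabs y) alpha) in *.
  assert (0 <= (2 * alpha * c - 2 * (alpha - 1)) * p) by (apply Rmult_le_pos; lra).
  assert (0 <= (alpha * c ^ 2 - (2 - alpha)) * p ^ 2) by (apply Rmult_le_pos; nra).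
  apply Rmult_le_reg_l with alpha; [lra|]; nra.
Qed.

Lemma one_add_pos_of_sqr_le (y q : R) :
  0 <= q -> y * y <= 2 * q + q ^ 2 -> 0 < 1 + y + q.
Proof. intros; destruct (Rle_lt_dec 0 y); nra. Qed.

Lemma neg_ln_le_ln (a b : R) : 0 < a -> 0 < b -> 1 <= a * b -> - ln a <= ln b.
Proof.
  intros ha hb hab.
  assert (ln_ab_ge0 : 0 <= ln (a * b)).
  { rewrite <- ln_1; destruct hab as [hab | <-]; [| lra].
    left; apply ln_increasing; lra. }
  rewrite ln_mult in ln_ab_ge0 by lra; lra.
Qed.

Theorem lemmaA2 (alpha : R) (h1 : 1 < alpha) (h2 : alpha <= 2) :
  (forall y : R, 0 < 1 + y + c_alpha alpha * rpow (Rabs y) alpha) /\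
  (forall y : R,
     - ln (1 + y + c_alpha alpha * rpow (Rabs y) alpha)
     <= ln (1 - y + c_alpha alpha * rpow (Rabs y) alpha)).
Proof.
  assert (c_ge0 : 0 <= c_alpha alpha).
  { destruct (c_alpha_bounds alpha h1 h2); nra. }
  assert (q_ge0 : forall y, 0 <= c_alpha alpha * rpow (Rabs y) alpha).
  { intro y; apply Rmult_le_pos; [exact c_ge0 | apply rpow_ge0]. }
  assert (pos : forall y, 0 < 1 + y + c_alpha alpha * rpow (Rabs y) alpha).
  { intro y; apply one_add_pos_of_sqr_le; [apply q_ge0|].
    pose proof (sqr_le_c_alpha_rpow alpha y h1 h2); lra. }
  split; [exact pos|]; intro y.
  pose proof (pos (- y)) as pos_neg; rewrite Rabs_Ropp in pos_neg.
  pose proof (sqr_le_c_alpha_rpow alpha y h1 h2).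
  apply neg_ln_le_ln; [apply pos | lra | nra].
Qed.
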